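(* Let $(G_i)_{i\in I}$ be a finite collection of groups. For $J\subset I$ put $G_J=\prod_{i\in J}G_i$ and let $p_J\colon G_I\to G_J$ be the projection, with induced ring homomorphism $\mathbb Zp_J\colon\mathbb ZG_I\to\mathbb ZG_J$. Then for every $s\in\mathbb N$, $$\bigcap_{J\subset I,\ \#J<s}\ker(\mathbb Zp_J)\subset\Delta(G_I)^s.$$
   Context: For a group $G$, $\mathbb ZG$ is the integral group ring, $\Delta(G)$ its augmentation ideal (kernel of the map sending each group element to $1$), $\Delta(G)^0=\mathbb ZG$ and $\Delta(G)^s$ its $s$-th power. An empty intersection of subsets of $\mathbb ZG_I$ is $\mathbb ZG_I$. *)

(* Groups are MathComp 2.5's (possibly infinite) [groupType]
   from boot/monoid.v; the integral group ring ZG is modelled on the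
   finitely-supported functions G -> int of multinomials' [monalg]
   ({malg int[G]}), with the group-ring (convolution) product defined below. *)
From HB Require Import structures.
From mathcomp Require Import all_boot all_order all_algebra.
From mathcomp Require Import finmap.
From mathcomp Require monalg.
Import monalg.

Set Implicit Arguments.
Unset Strict Implicit.
Unset Printing Implicit Defensive.

Import GRing.Theory.
Local Open Scope ring_scope.

Definition prodG (K : finType) (F : K -> groupType) := {dffun forall k, F k}.

Section ProdG.
Variables (K : finType) (F : K -> groupType).
HB.instance Definition _ := Choice.on (prodG F).

Definition prodG_one : prodG F := [ffun k => (1 : F k)%g].
Definition prodG_inv (x : prodG F) : prodG F := [ffun k => ((x k)^-1)%g].
Definition prodG_mul (x y : prodG F) : prodG F := [ffun k => (x k * y k)%g].

Lemma prodG_mulA : associative prodG_mul.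
Proof. by move=> x y z; apply/ffunP=> k; rewrite !ffunE mulgA. Qed.
Lemma prodG_mul1 : left_id prodG_one prodG_mul.
Proof. by move=> x; apply/ffunP=> k; rewrite !ffunE mul1g. Qed.
Lemma prodG_mulg1 : right_id prodG_one prodG_mul.
Proof. by move=> x; apply/ffunP=> k; rewrite !ffunE mulg1. Qed.
Lemma prodG_mulV : left_inverse prodG_one prodG_inv prodG_mul.
Proof. by move=> x; apply/ffunP=> k; rewrite !ffunE mulVg. Qed.
Lemma prodG_mulgV : right_inverse prodG_one prodG_inv prodG_mul.
Proof. by move=> x; apply/ffunP=> k; rewrite !ffunE mulgV. Qed.

HB.instance Definition _ := isGroup.Build (prodG F)
  prodG_mulA prodG_mul1 prodG_mulg1 prodG_mulV prodG_mulgV.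
End ProdG.

Definition subprodG (I : finType) (G : I -> groupType) (J : {set I}) :=
  prodG (fun j : {i : I | i \in J} => G (val j)).

Definition projG (I : finType) (G : I -> groupType) (J : {set I})
  (x : prodG G) : subprodG G J := [ffun j => x (val j)].

Definition ZG (G : groupType) := {malg int[G]}.

Definition ZGmul (G : groupType) (x y : ZG G) : ZG G :=
  \sum_(g <- msupp x) \sum_(h <- msupp y) << (x@_g * y@_h) *g (g * h)%g >>.

Definition ZGmap (G H : groupType) (f : G -> H) (x : ZG G) : ZG H :=
  \sum_(g <- msupp x) << x@_g *g f g >>.

Definition augm (G : groupType) (x : ZG G) : int := \sum_(g <- msupp x) x@_g.
Definition augIdeal (G : groupType) (x : ZG G) : Prop := augm x = 0.

Inductive idealMul (G : groupType) (P Q : ZG G -> Prop) : ZG G -> Prop :=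
  | idealMul0 : idealMul P Q 0
  | idealMulD a b x : P a -> Q b -> idealMul P Q x ->
                      idealMul P Q (ZGmul a b + x).

Fixpoint augPow (G : groupType) (s : nat) : ZG G -> Prop :=
  match s with
  | 0 => fun _ => True
  | s'.+1 => idealMul (@augIdeal G) (@augPow G s')
  end.

(* For g in G_I and J ⊆ I let g_J be g with the coordinates outside J
   replaced by 1.  Möbius inversion on the subsets of I writes
   [g] = [g_I] as the sum over K ⊆ I of
   P_K(g) = sum_{J ⊆ K} (-1)^{|K \ J|} [g_J] = prod_{a ∈ K} ([g_{a}] - 1),
   and P_K(g) lies in Δ^{|K|}.  Summing x = sum_g x_g [g] this way, the
   terms with #K >= s lie in Δ^s, while for #K < s the part
   sum_g x_g P_K(g) is a signed sum of the images of x under g ↦ g_J with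
   #J < s; these vanish because g ↦ g_J has the same fibres as p_J. *)
From HB Require Import structures.
From mathcomp Require Import all_boot all_order all_algebra.
From mathcomp Require Import finmap.
From mathcomp Require monalg.
Import monalg.

Set Implicit Arguments.
Unset Strict Implicit.
Unset Printing Implicit Defensive.

Import GRing.Theory.
Local Open Scope ring_scope.

Section GroupRing.
Variable H : groupType.
Implicit Types (x y z : ZG H) (c : int) (k : H).

Lemma big_msupp_incl (V : nmodType) x (d : {fset H}) (F : H -> int -> V) :
  (forall k, F k 0 = 0) -> (msupp x `<=` d)%fset ->
  \sum_(k <- msupp x) F k x@_k = \sum_(k <- d) F k x@_k.
Proof.
by move=> F0 le; apply: big_fset_incl => // k _ /mcoeff_outdom ->.
Qed.

Lemma ZGmulEw x y (d1 d2 : {fset H}) :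
  (msupp x `<=` d1)%fset -> (msupp y `<=` d2)%fset ->
  ZGmul x y = \sum_(g <- d1) \sum_(h <- d2) << x@_g * y@_h *g (g * h)%g >>.
Proof.
move=> le1 le2; rewrite /ZGmul (big_msupp_incl
  (F := fun g c => \sum_(h <- msupp y) << c * y@_h *g (g * h)%g >>) _ le1).
  apply: eq_bigr => g _; rewrite (big_msupp_incl
    (F := fun h c => << x@_g * c *g (g * h)%g >>) _ le2) // => h.
  by rewrite mulr0 monalgU0.
by move=> g; rewrite big1 // => h _; rewrite mul0r monalgU0.
Qed.

Lemma ZGmulDl x y z : ZGmul (x + y) z = ZGmul x z + ZGmul y z.
Proof.
rewrite (ZGmulEw (msuppD_le x y) (fsubset_refl _)).
rewrite (ZGmulEw (fsubsetUl (msupp x) (msupp y)) (fsubset_refl _)).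
rewrite (ZGmulEw (fsubsetUr (msupp x) (msupp y)) (fsubset_refl _)).
rewrite -big_split; apply: eq_bigr => g _; rewrite -big_split.
by apply: eq_bigr => h _; rewrite mcoeffD mulrDl monalgUD.
Qed.

Lemma ZGmulDr x y z : ZGmul x (y + z) = ZGmul x y + ZGmul x z.
Proof.
rewrite (ZGmulEw (fsubset_refl _) (msuppD_le y z)).
rewrite (ZGmulEw (fsubset_refl _) (fsubsetUl (msupp y) (msupp z))).
rewrite (ZGmulEw (fsubset_refl _) (fsubsetUr (msupp y) (msupp z))).
rewrite -big_split; apply: eq_bigr => g _; rewrite -big_split.
by apply: eq_bigr => h _; rewrite mcoeffD mulrDr monalgUD.
Qed.

Lemma ZGmulNl x y : ZGmul (- x) y = - ZGmul x y.
Proof.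
rewrite /ZGmul msuppN -sumrN; apply: eq_bigr => g _; rewrite -sumrN.
by apply: eq_bigr => h _; rewrite mcoeffN mulNr monalgUN.
Qed.

Lemma ZGmulBl x y z : ZGmul (x - y) z = ZGmul x z - ZGmul y z.
Proof. by rewrite ZGmulDl ZGmulNl. Qed.

Lemma ZGmulr0 x : ZGmul x 0 = 0.
Proof. by rewrite /ZGmul big1 // => g _; rewrite msupp0 big_seq_fset0. Qed.

Lemma ZGmul_sumr x (T : Type) (r : seq T) (P : pred T) (F : T -> ZG H) :
  ZGmul x (\sum_(i <- r | P i) F i) = \sum_(i <- r | P i) ZGmul x (F i).
Proof. exact: (big_morph (ZGmul x) (ZGmulDr x) (ZGmulr0 x)). Qed.

Lemma ZGmulUU c1 c2 k1 k2 :
  ZGmul << c1 *g k1 >> << c2 *g k2 >> = << c1 * c2 *g (k1 * k2)%g >>.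
Proof. by rewrite (ZGmulEw msuppU_le msuppU_le) !big_seq_fset1 !mcoeffUU. Qed.

Lemma ZGmul1l x : ZGmul << (1%g : H) >> x = x.
Proof.
rewrite (ZGmulEw msuppU_le (fsubset_refl _)) big_seq_fset1 [RHS]monalgE.
by apply: eq_bigr => h _; rewrite mcoeffUU mul1r mul1g.
Qed.

Lemma augmEw x (d : {fset H}) :
  (msupp x `<=` d)%fset -> augm x = \sum_(k <- d) x@_k.
Proof. by move=> le; rewrite /augm (big_msupp_incl (F := fun _ c => c) _ le). Qed.

Lemma augmB x y : augm (x - y) = augm x - augm y.
Proof.
rewrite (augmEw (msuppB_le x y)) (augmEw (fsubsetUl (msupp x) (msupp y))).
rewrite (augmEw (fsubsetUr (msupp x) (msupp y))) -sumrB.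
by apply: eq_bigr => k _; rewrite mcoeffB.
Qed.

Lemma augmU c k : augm << c *g k >> = c.
Proof. by rewrite (augmEw msuppU_le) big_seq_fset1 mcoeffUU. Qed.

Lemma monalgUZ c1 c2 k : << c1 * c2 *g k >> = c1 *: << c2 *g k >>.
Proof. by apply/malgP => k'; rewrite mcoeffZ !mcoeffU mulrnAr. Qed.

Lemma mcoeff_ZGmap (K : groupType) (f : H -> K) x (k : K) :
  (ZGmap f x)@_k = \sum_(g <- msupp x | f g == k) x@_g.
Proof.
rewrite /ZGmap raddf_sum /= [RHS]big_mkcond /=; apply: eq_bigr => g _.
by rewrite mcoeffU; case: (f g == k).
Qed.

Lemma ZGmap_eq0_fibres (K L : groupType) (f : H -> K) (p : H -> L) x :
  (forall g h, (f g == f h) = (p g == p h)) ->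
  ZGmap p x = 0 -> ZGmap f x = 0.
Proof.
move=> fibres px0; apply/malgP => k; rewrite mcoeff_ZGmap mcoeff0.
have [/hasP[g0 _ /eqP <-]|/hasPn no_g] :=
  boolP (has (fun g => f g == k) (msupp x)).
  rewrite (eq_bigl (fun g => p g == p g0)) => [|g]; last exact: fibres.
  by rewrite -mcoeff_ZGmap px0 mcoeff0.
rewrite big_seq_cond big1 // => g /andP[gx fg].
by move: (no_g g gx); rewrite fg.
Qed.

End GroupRing.

Section AugmentationPowers.
Variable H : groupType.
Implicit Types (x y : ZG H) (P Q : ZG H -> Prop).

Lemma idealMulD_closed P Q x y :
  idealMul P Q x -> idealMul P Q y -> idealMul P Q (x + y).
Proof.
elim=> [|a b z Pa Qb _ IH] Qy; first by rewrite add0r.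
by rewrite -addrA; apply: idealMulD Pa Qb (IH Qy).
Qed.

Lemma idealMulSr P Q Q' x :
  (forall y, Q y -> Q' y) -> idealMul P Q x -> idealMul P Q' x.
Proof.
move=> QQ'; elim=> [|a b z Pa Qb _ IH]; first exact: idealMul0.
exact: idealMulD Pa (QQ' _ Qb) IH.
Qed.

Lemma augPowSr n x : augPow n.+1 x -> augPow n x.
Proof. by elim: n x => [//|n IH] x /=; apply: idealMulSr. Qed.

Lemma augPowS m n x : (n <= m)%N -> augPow m x -> augPow n x.
Proof.
move=> /subnK <-; elim: (m - n)%N => [//|d IH].
by rewrite addSn => /augPowSr.
Qed.

Lemma augPow_sum n (T : Type) (r : seq T) (P : pred T) (F : T -> ZG H) :
  (forall i, P i -> augPow n (F i)) -> augPow n (\sum_(i <- r | P i) F i).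
Proof.
case: n => // n PF; apply: big_ind => //; first exact: idealMul0.
exact: idealMulD_closed.
Qed.

End AugmentationPowers.

Lemma sum_subsetU1 (T : finType) (V : nmodType) a (K : {set T})
    (F : {set T} -> V) : a \notin K ->
  \sum_(J : {set T} | J \subset a |: K) F J =
  \sum_(J : {set T} | J \subset K) (F J + F (a |: J)).
Proof.
move=> aK; have notin_sub (J : {set T}) : J \subset K -> a \notin J.
  by move=> sJK; apply: contra aK; exact: (subsetP sJK).
rewrite big_split /= (bigID (fun J : {set T} => a \in J)) /= addrC.
congr (_ + _).
  apply: eq_bigl => J; apply/andP/idP => [[sJ aJ]|sJK]; last first.
    by rewrite (subset_trans sJK (subsetUr _ _)) notin_sub.
  apply/subsetP => i iJ; move: (subsetP sJ i iJ); rewrite !inE.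
  by case/orP => [/eqP ia|//]; rewrite -ia iJ in aJ.
rewrite (reindex_onto (fun J => a |: J) (fun J => J :\ a)) /= => [|J /andP[_ aJ]].
  apply: eq_bigl => J; apply/idP/idP => [/andP[/andP[sJ _] /eqP eJ]|sJK].
    by rewrite -eJ -(setU1K aK) setSD.
  by rewrite setU1K ?notin_sub // eqxx setU11 setUS.
by rewrite setD1K.
Qed.

Section ProductGroups.
Variables (I : finType) (G : I -> groupType).
Local Notation GI := (prodG G).
Implicit Types (J K A : {set I}) (c : int) (g h : GI).

Definition prodG_restr J g : GI := [ffun i => if i \in J then g i else 1%g].

Lemma prodG_restrT g : prodG_restr setT g = g.
Proof. by apply/ffunP => i; rewrite ffunE inE. Qed.

Lemma prodG_restrU1 a J g : a \notin J ->
  prodG_restr (a |: J) g = (prodG_restr [set a] g * prodG_restr J g)%g.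
Proof.
move=> aJ; apply/ffunP => i; rewrite /= !ffunE !inE.
by case: (eqVneq i a) => [->|_] /=; rewrite ?(negPf aJ) ?mulg1 ?mul1g.
Qed.

Lemma prodG_restr_fibres J g h :
  (prodG_restr J g == prodG_restr J h) = (projG J g == projG J h).
Proof.
apply/eqP/eqP => [gh|gh].
  apply/ffunP => j; move/ffunP/(_ (val j)): gh.
  by rewrite !ffunE (valP j).
apply/ffunP => i; rewrite !ffunE; case: ifP => // iJ.
by move/ffunP/(_ (exist _ i iJ)): gh; rewrite !ffunE.
Qed.

(* c * prod_{a in K} ([g_{a}] - 1), expanded by inclusion–exclusion *)
Definition restr_altsum K c g : ZG GI :=
  \sum_(J : {set I} | J \subset K)
    << (-1) ^+ #|K :\: J| * c *g prodG_restr J g >>.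

Lemma restr_altsumU1 a K c g : a \notin K ->
  restr_altsum (a |: K) c g =
  ZGmul (<< prodG_restr [set a] g >> - << (1%g : GI) >>) (restr_altsum K c g).
Proof.
move=> aK; rewrite /restr_altsum sum_subsetU1 // ZGmulBl ZGmul1l ZGmul_sumr.
rewrite -sumrB; apply: eq_bigr => J sJK.
have aJ : a \notin J by apply: contra aK; exact: (subsetP sJK).
have ->: (a |: K) :\: J = a |: (K :\: J).
  by apply/setP => i; rewrite !inE; case: eqP => // ->; rewrite (negPf aJ).
have ->: (a |: K) :\: (a |: J) = K :\: J.
  by apply/setP => i; rewrite !inE; case: eqP => // ->; rewrite (negPf aK) andbF.
rewrite cardsU1 !inE (negPf aK) andbF add1n exprS mulN1r mulNr monalgUN.
by rewrite ZGmulUU mul1r -prodG_restrU1 // addrC.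
Qed.

Lemma restr_altsum_augPow K c g : augPow #|K| (restr_altsum K c g).
Proof.
move cardK: #|K| => n; elim: n K cardK => [//|n IH] K cardK.
have [a aK] : exists a, a \in K by apply/set0Pn; rewrite -card_gt0 cardK.
have cardKa : #|K :\ a| = n by move: cardK; rewrite (cardsD1 a) aK => -[].
rewrite -(setD1K aK) restr_altsumU1 ?setD11 // -[ZGmul _ _]addr0.
apply: idealMulD; last exact: idealMul0.
  by rewrite /augIdeal augmB !augmU subrr.
exact: IH.
Qed.

Lemma sum_restr_altsum A c g :
  \sum_(K : {set I} | K \subset A) restr_altsum K c g =
  << c *g prodG_restr A g >>.
Proof.
move cardA: #|A| => n; elim: n A cardA => [|n IH] A cardA.
  move/eqP: cardA; rewrite cards_eq0 => /eqP ->.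
  rewrite (big_pred1 set0) => [|J]; last by rewrite subset0.
  rewrite /restr_altsum (big_pred1 set0) => [|J]; last by rewrite subset0.
  by rewrite setDv cards0 expr0 mul1r.
have [a aA] : exists a, a \in A by apply/set0Pn; rewrite -card_gt0 cardA.
have aAa : a \notin A :\ a by rewrite setD11.
have cardAa : #|A :\ a| = n by move: cardA; rewrite (cardsD1 a) aA => -[].
rewrite -(setD1K aA) sum_subsetU1 //.
rewrite (eq_bigr (fun K => ZGmul << prodG_restr [set a] g >>
                                 (restr_altsum K c g))) => [|K sK]; last first.
  have aK : a \notin K by apply: contra aAa; exact: (subsetP sK).
  by rewrite restr_altsumU1 // ZGmulBl ZGmul1l addrC subrK.
by rewrite -ZGmul_sumr IH // ZGmulUU mul1r -prodG_restrU1.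
Qed.

Lemma sum_restr_altsum_coef K (x : ZG GI) :
  \sum_(g <- msupp x) restr_altsum K x@_g g =
  \sum_(J : {set I} | J \subset K) (-1) ^+ #|K :\: J| *: ZGmap (prodG_restr J) x.
Proof.
rewrite exchange_big; apply: eq_bigr => J _; rewrite /ZGmap scaler_sumr.
by apply: eq_bigr => g _; rewrite monalgUZ.
Qed.

End ProductGroups.

Theorem mainTheorem4 (I : finType) (G : I -> groupType) (s : nat)
  (x : ZG (prodG G)) :
  (forall J : {set I}, (#|J| < s)%N -> ZGmap (@projG I G J) x = 0) ->
  augPow s x.
Proof.
move=> ker_x; rewrite [x]monalgE.
under eq_bigr => g _ do rewrite -[g in << _ *g g >>]prodG_restrT
  -sum_restr_altsum.
rewrite exchange_big /= (bigID (fun K : {set I} => (#|K| < s)%N)) /=.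
rewrite big1 ?add0r => [|K /andP[_ small_K]].
  apply: augPow_sum => K /andP[_ large_K]; apply: augPow_sum => g _.
  by apply: (augPowS _ (restr_altsum_augPow _ _ _)); rewrite leqNgt.
rewrite sum_restr_altsum_coef big1 // => J sJK.
have small_J : (#|J| < s)%N := leq_ltn_trans (subset_leq_card sJK) small_K.
by rewrite (ZGmap_eq0_fibres (prodG_restr_fibres J) (ker_x J small_J)) scaler0.
Qed.
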